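(* Let $0\le m\le n$. Every adjacency-preserving (resp. adjacency-preserving one-to-one) map $f:[m]\to[n]$ factors uniquely as a composite $[m]\xrightarrow{\psi}[m]\xrightarrow{\phi}[n]$ with $\phi\in\square$ and $\psi$ adjacency-preserving (resp. adjacency-preserving one-to-one).
   Context: $[0]=\{()\}$, $[n]=\{0,1\}^n$ ($n\ge1$) with the product order. Face maps $\delta_i^\alpha:[n-1]\to[n]$ insert $\alpha\in\{0,1\}$ at position $i$; $\square$ is the category with objects $[n]$, $n\ge0$, generated by the face maps (under composition of set maps). With $d(\epsilon,\epsilon')=\sum_i|\epsilon_i-\epsilon'_i|$, a map $f:[m]\to[n]$ is adjacency-preserving if it is strictly increasing and $d(x,y)=1$ implies $d(f(x),f(y))=1$. *)

From mathcomp Require Import all_boot.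
Set Implicit Arguments. Unset Strict Implicit. Unset Printing Implicit Defensive.

(* [n] = {0,1}^n, as boolean functions on coordinates 'I_n.  [0] has one element. *)
Definition cube (n : nat) := {ffun 'I_n -> bool}.

Definition cle n (x y : cube n) : bool := [forall j, x j <= y j].
Definition clt n (x y : cube n) : bool := (x != y) && cle x y.

Definition dist n (x y : cube n) : nat := #|[set j | x j != y j]|.

Definition adj_preserving m n (f : cube m -> cube n) : Prop :=
  (forall x y, clt x y -> clt (f x) (f y)) /\
  (forall x y, dist x y = 1 -> dist (f x) (f y) = 1).

(* coordinate k of x (as a nat), default false out of range *)
Definition coord n (x : cube n) (k : nat) : bool :=
  if insub k is Some k' then x k' else false.

(* face map delta_i^a : [n] -> [n+1] inserting a at (0-based) position i <= n *)
Definition face n (i : nat) (a : bool) (x : cube n) : cube n.+1 :=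
  [ffun j : 'I_n.+1 =>
     if (j < i)%N then coord x j
     else if j == i :> nat then a else coord x j.-1].

(* morphisms of the category box: composites of face maps (incl. identities) *)
Inductive box_mor : forall m n : nat, (cube m -> cube n) -> Prop :=
  | box_id m : box_mor (@id (cube m))
  | box_face m n (g : cube m -> cube n) (i : nat) (a : bool) :
      box_mor g -> (i <= n)%N -> box_mor (face i a \o g).

Definition in_box m n (phi : cube m -> cube n) : Prop :=
  exists2 g, box_mor g & phi =1 g.

From mathcomp Require Import all_boot.
Set Implicit Arguments. Unset Strict Implicit. Unset Printing Implicit Defensive.

(* An adjacency-preserving map raises the number of ones by exactly one along
   each edge of a maximal chain from the bottom to the top of [m], so it sends
   bottom and top to comparable points at distance m.  If m < n, some
   coordinate therefore agrees at f(bottom) and f(top); by monotonicity it is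
   constant on the image of f, so f is a face map after a map into [n-1], and
   induction gives the factorization.  For uniqueness: an adjacency-preserving
   endomorphism psi fixes bottom and top, so phi is pinned at bottom and top.
   A composite of face maps copies its input, in increasing order, into the
   coordinates where these two values differ and is constant elsewhere, hence
   it is determined by them; phi is then injective, which determines psi. *)

Definition cube_bot m : cube m := [ffun _ => false].
Definition cube_top m : cube m := [ffun _ => true].
Definition weight n (x : cube n) := #|[set j | x j]|.
Definition stair m (k : nat) : cube m := [ffun j : 'I_m => (j < k)%N].

Section Order.
Variable n : nat.
Implicit Types x y : cube n.

Lemma clt_cle x y : clt x y -> cle x y.
Proof. by case/andP. Qed.

Lemma cle_refl x : cle x x.
Proof. by apply/forallP=> j; rewrite leqnn. Qed.

Lemma cle_support x y : cle x y -> [set j | x j] \subset [set j | y j].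
Proof.
rewrite /cle => /forallP le_xy; apply/subsetP=> j; rewrite !inE => xj.
by have := le_xy j; rewrite xj; case: (y j).
Qed.

Lemma weight_clt x y : clt x y -> weight x < weight y.
Proof.
case/andP=> neq_xy le_xy; apply: proper_card.
rewrite properEneq cle_support // andbT; apply: contra neq_xy => /eqP/setP eq_xy.
by apply/eqP/ffunP=> j; have := eq_xy j; rewrite !inE; do 2!case: (_ j).
Qed.

Lemma dist_cle x y : cle x y -> dist x y = weight y - weight x.
Proof.
move=> le_xy; rewrite /dist /weight.
have -> : [set j | x j != y j] = [set j | y j] :\: [set j | x j].
  apply/setP=> j; rewrite !inE.
  by move: le_xy => /forallP/(_ j); do 2!case: (_ j).
by rewrite cardsD (setIidPr (cle_support le_xy)).
Qed.

Lemma cube_bot_cle x : cle (cube_bot n) x.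
Proof. by apply/forallP=> j; rewrite ffunE. Qed.

Lemma cle_cube_top x : cle x (cube_top n).
Proof. by apply/forallP=> j; rewrite ffunE; case: (x j). Qed.

Lemma weight_le x : weight x <= n.
Proof. by rewrite /weight (leq_trans (max_card _)) ?card_ord. Qed.

Lemma weight_eq0 x : weight x = 0 -> x = cube_bot n.
Proof.
move/eqP; rewrite cards_eq0 => /eqP/setP x0; apply/ffunP=> j.
by have := x0 j; rewrite !inE ffunE => /negbT/negbTE.
Qed.

Lemma weight_eqn x : weight x = n -> x = cube_top n.
Proof.
move=> wx; have : [set j | x j] == setT.
  by rewrite eqEcard subsetT cardsT card_ord /= -[X in X <= _]wx.
by move/eqP/setP=> xT; apply/ffunP=> j; have := xT j; rewrite !inE ffunE.
Qed.

End Order.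

Lemma stair_step m k : k < m ->
  clt (stair m k) (stair m k.+1) /\ dist (stair m k) (stair m k.+1) = 1.
Proof.
move=> lt_km.
have le_k : cle (stair m k) (stair m k.+1).
  by apply/forallP=> j; rewrite !ffunE ltnS; case: (ltnP j k) => // /ltnW ->.
have diff_k : [set j | stair m k j != stair m k.+1 j] = [set Ordinal lt_km].
  by apply/setP=> j; rewrite !inE !ffunE ltnS -val_eqE /=; case: ltngtP.
have dist_k : dist (stair m k) (stair m k.+1) = 1 by rewrite /dist diff_k cards1.
split=> //; rewrite /clt le_k andbT; apply/eqP=> eq_k.
move: dist_k; rewrite /dist eq_k.
suff -> : [set j | stair m k.+1 j != stair m k.+1 j] = set0 by rewrite cards0.
by apply/setP=> j; rewrite !inE eqxx.
Qed.

Lemma stair0 m : stair m 0 = cube_bot m.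
Proof. by apply/ffunP=> j; rewrite !ffunE. Qed.

Lemma stair_top m : stair m m = cube_top m.
Proof. by apply/ffunP=> j; rewrite !ffunE ltn_ord. Qed.

Section AdjacencyPreserving.
Variables m n : nat.
Variable f : cube m -> cube n.
Hypothesis adj_f : adj_preserving f.

Lemma adj_weight_stair k : k <= m -> weight (f (stair m k)) = weight (f (stair m 0)) + k.
Proof.
case: adj_f => mono_f dist_f; elim: k => [|k IHk] lt_km; first by rewrite addn0.
have [lt_k dist_k] := stair_step lt_km.
have lt_fk := mono_f _ _ lt_k.
have := dist_f _ _ dist_k; rewrite dist_cle ?clt_cle //.
have := weight_clt lt_fk; rewrite (IHk (ltnW lt_km)) => lt_w eq_w.
by rewrite -(subnKC (ltnW lt_w)) eq_w addn1 addnS.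
Qed.

Lemma adj_weight_top : weight (f (cube_top m)) = weight (f (cube_bot m)) + m.
Proof. by rewrite -stair_top -stair0 adj_weight_stair. Qed.

Lemma adj_cle_bot x : cle (f (cube_bot m)) (f x).
Proof.
have [<-|neq] := eqVneq (cube_bot m) x; first exact: cle_refl.
by apply/clt_cle/adj_f.1; rewrite /clt neq cube_bot_cle.
Qed.

Lemma adj_cle_top x : cle (f x) (f (cube_top m)).
Proof.
have [->|neq] := eqVneq x (cube_top m); first exact: cle_refl.
by apply/clt_cle/adj_f.1; rewrite /clt neq cle_cube_top.
Qed.

(* Only m coordinates can change between f(bottom) and f(top). *)
Lemma adj_const_coord : m < n -> exists j, forall x, f x j = f (cube_bot m) j.
Proof.
move=> lt_mn.
have [j /eqP eq_j|neq] := pickP (fun j => f (cube_bot m) j == f (cube_top m) j).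
  exists j => x; move: (adj_cle_bot x) (adj_cle_top x).
  move=> /forallP/(_ j) + /forallP/(_ j); rewrite -eq_j.
  by case: (f x j); case: (f _ j).
have dist_n : dist (f (cube_bot m)) (f (cube_top m)) = n.
  by rewrite /dist -[RHS]card_ord -cardsT; apply: eq_card => j; rewrite !inE neq.
move: dist_n; rewrite dist_cle ?adj_cle_top // adj_weight_top addKn => eq_mn.
by rewrite eq_mn ltnn in lt_mn.
Qed.

End AdjacencyPreserving.

Lemma adj_endo_bot_top m (psi : cube m -> cube m) : adj_preserving psi ->
  psi (cube_bot m) = cube_bot m /\ psi (cube_top m) = cube_top m.
Proof.
move=> adj_psi; have := weight_le (psi (cube_top m)); rewrite adj_weight_top //.
move=> le_bot; have w_bot : weight (psi (cube_bot m)) = 0.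
  by apply/eqP; rewrite -leqn0 -(leq_add2r m) add0n.
by split; [apply: weight_eq0 | apply: weight_eqn; rewrite adj_weight_top // w_bot].
Qed.

Section Faces.
Variable n : nat.

Lemma coord_ord (x : cube n) (k : 'I_n) : coord x k = x k.
Proof. by rewrite /coord valK. Qed.

Lemma face_lift (i : 'I_n.+1) a (y : cube n) (k : 'I_n) : face i a y (lift i k) = y k.
Proof.
rewrite ffunE /= /bump; case: (leqP i k) => [le_ik|lt_ki].
  have lt_ik1 : i < k.+1 := leq_ltn_trans le_ik (ltnSn k).
  by rewrite add1n ltnNge (ltnW lt_ik1) gtn_eqF //= -coord_ord.
by rewrite add0n lt_ki -coord_ord.
Qed.

Lemma face_at (i : 'I_n.+1) a (y : cube n) : face i a y i = a.
Proof. by rewrite ffunE ltnn eqxx. Qed.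

Definition drop_coord (j : 'I_n.+1) (x : cube n.+1) : cube n := [ffun k => x (lift j k)].

Lemma face_drop_coord (j : 'I_n.+1) (x : cube n.+1) : face j (x j) (drop_coord j x) = x.
Proof.
apply/ffunP=> k; case: (unliftP j k) => [k' ->|->]; last by rewrite face_at.
by rewrite face_lift ffunE.
Qed.

Section SameCoord.
Variables (j : 'I_n.+1) (x y : cube n.+1).
Hypothesis eq_xy_j : x j = y j.

Lemma drop_coord_inj : drop_coord j x = drop_coord j y -> x = y.
Proof.
move=> eq_drop; rewrite -(face_drop_coord j x) -(face_drop_coord j y).
by rewrite eq_xy_j eq_drop.
Qed.

Lemma cle_drop_coord : cle (drop_coord j x) (drop_coord j y) = cle x y.
Proof.
apply/forallP/forallP=> le_xy k; last by rewrite !ffunE.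
case: (unliftP j k) => [k' ->|->]; last by rewrite eq_xy_j.
by have := le_xy k'; rewrite !ffunE.
Qed.

Lemma dist_drop_coord : dist (drop_coord j x) (drop_coord j y) = dist x y.
Proof.
rewrite /dist; have -> : [set k | x k != y k] =
    lift j @: [set k | drop_coord j x k != drop_coord j y k].
  apply/setP=> k; case: (unliftP j k) => [k' ->|->].
    by rewrite (mem_imset _ _ (@lift_inj _ j)) !inE !ffunE.
  rewrite inE eq_xy_j eqxx; apply/esym/negbTE/imsetP=> -[k' _ eq_k].
  by have := neq_lift j k'; rewrite -eq_k eqxx.
by rewrite card_imset //; apply: lift_inj.
Qed.

End SameCoord.

Lemma adj_drop_coord m (f : cube m -> cube n.+1) (j : 'I_n.+1) :
  adj_preserving f -> (forall x y, f x j = f y j) ->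
  adj_preserving (drop_coord j \o f).
Proof.
case=> mono_f dist_f const_j; split=> x y /=.
  move/mono_f; rewrite /clt cle_drop_coord // => /andP[neq ->]; rewrite andbT.
  by apply: contra neq => /eqP/drop_coord_inj ->.
by move/dist_f; rewrite dist_drop_coord.
Qed.

End Faces.

Lemma adj_factor_exists m n (f : cube m -> cube n) : m <= n -> adj_preserving f ->
  exists phi : cube m -> cube n, exists psi : cube m -> cube m,
    [/\ in_box phi, adj_preserving psi & f =1 phi \o psi].
Proof.
move/subnKC; move: (n - m) => d.
elim: d m n f => [|d IHd] m n f; rewrite ?addn0 ?addnS => eq_n adj_f; subst n.
  by exists id, f; split=> //; exists id => //; apply: box_id.
have [j const_j] := adj_const_coord adj_f (leq_addr d m : m < (m + d).+1).
have eq_j x y : f x j = f y j by rewrite !const_j.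
have [phi [psi [[g box_g eq_g] adj_psi fact]]] := IHd m _ _ erefl (adj_drop_coord adj_f eq_j).
exists (face j (f (cube_bot m) j) \o phi), psi; split=> //.
  exists (face j (f (cube_bot m) j) \o g); last by move=> x /=; rewrite eq_g.
  by apply: box_face => //; rewrite -ltnS.
by move=> x /=; rewrite -(const_j x) -[phi _]/((phi \o psi) x) -fact face_drop_coord.
Qed.

(* Concrete description of the morphisms of box: the input is copied to the
   positions h 0 < ... < h (m-1) and the other coordinates are constant. *)
Definition coord_insertion m n (g : cube m -> cube n) := exists h : 'I_m -> 'I_n,
  [/\ {homo h : i k / i < k},
      forall x i, g x (h i) = x i &
      forall j, j \notin codom h -> forall x y, g x j = g y j].

Lemma coord_insertion_ext m n (g g' : cube m -> cube n) :
  g =1 g' -> coord_insertion g -> coord_insertion g'.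
Proof.
move=> eq_g [h [incr_h copy_h const_h]]; exists h; split=> // [x i|j nj x y].
  by rewrite -eq_g.
by rewrite -!eq_g; apply: const_h.
Qed.

Lemma box_mor_insertion m n (g : cube m -> cube n) : box_mor g -> coord_insertion g.
Proof.
elim=> {m n g} [m|m n g i a _ [h [incr_h copy_h const_h]] le_in].
  by exists id; split=> // j; rewrite codom_f.
pose i' := Ordinal (le_in : i < n.+1).
exists (lift i' \o h); split=> [k l lt_kl|x k|j nj x y] /=.
- by rewrite !ltnNge leq_bump2 -ltnNge incr_h.
- by rewrite -[i]/(val i') face_lift copy_h.
rewrite -[i]/(val i'); case: (unliftP i' j) nj => [j' ->|->] nj; last by rewrite !face_at.
rewrite !face_lift; apply: const_h; apply: contra nj => /codomP[k ->].
exact: codom_f.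
Qed.

Lemma in_box_insertion m n (g : cube m -> cube n) : in_box g -> coord_insertion g.
Proof. by case=> g' /box_mor_insertion ins_g' eq_g; apply: coord_insertion_ext ins_g'. Qed.

Lemma coord_insertion_inj m n (g : cube m -> cube n) : coord_insertion g -> injective g.
Proof.
case=> h [_ copy_h _] x y eq_g; apply/ffunP=> i.
by rewrite -(copy_h x i) -(copy_h y i) eq_g.
Qed.

Lemma incr_ord_codom_eq m n (h h' : 'I_m -> 'I_n) :
  {homo h : i k / i < k} -> {homo h' : i k / i < k} -> codom h =i codom h' -> h =1 h'.
Proof.
move=> incr_h incr_h' eq_codom.
have sorted_ord : sorted (relpre val ltn) (enum 'I_m).
  by rewrite -sorted_map val_enum_ord iota_ltn_sorted.
have : [seq val (h i) | i <- enum 'I_m] = [seq val (h' i) | i <- enum 'I_m].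
  apply: (irr_sorted_eq ltn_trans ltnn).
  - by rewrite sorted_map; apply: sub_sorted sorted_ord => a b; apply: incr_h.
  - by rewrite sorted_map; apply: sub_sorted sorted_ord => a b; apply: incr_h'.
  move=> k; apply/mapP/mapP=> -[i _ ->].
    have /codomP[i' ->] : h i \in codom h' by rewrite -eq_codom codom_f.
    by exists i'; rewrite ?mem_enum.
  have /codomP[i' ->] : h' i \in codom h by rewrite eq_codom codom_f.
  by exists i'; rewrite ?mem_enum.
by move/eq_in_map=> eq_h i; apply: val_inj; apply: eq_h; rewrite mem_enum.
Qed.

Section Insertion.
Variables (m n : nat) (g : cube m -> cube n) (h : 'I_m -> 'I_n).
Hypothesis copy_h : forall x i, g x (h i) = x i.
Hypothesis const_h : forall j, j \notin codom h -> forall x y, g x j = g y j.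

Lemma insertion_codom j : (j \in codom h) = (g (cube_bot m) j != g (cube_top m) j).
Proof.
have [/codomP[i ->]|nj] := boolP (j \in codom h); first by rewrite !copy_h !ffunE.
by rewrite (const_h nj _ (cube_top m)) eqxx.
Qed.

End Insertion.

Lemma coord_insertion_eq m n (g g' : cube m -> cube n) :
  coord_insertion g -> coord_insertion g' ->
  g (cube_bot m) = g' (cube_bot m) -> g (cube_top m) = g' (cube_top m) -> g =1 g'.
Proof.
case=> h [incr_h copy_h const_h] [h' [incr_h' copy_h' const_h']] eq_bot eq_top.
have eq_codom : codom h =i codom h'.
  move=> j; rewrite (insertion_codom copy_h const_h).
  by rewrite (insertion_codom copy_h' const_h') eq_bot eq_top.
have eq_h := incr_ord_codom_eq incr_h incr_h' eq_codom.
move=> x; apply/ffunP=> j; have [/codomP[i ->]|nj] := boolP (j \in codom h).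
  by rewrite copy_h eq_h copy_h'.
rewrite (const_h _ nj _ (cube_bot m)) eq_bot (const_h' _ _ _ (cube_bot m)) //.
by rewrite -eq_codom.
Qed.

Lemma adj_factor_unique m n (f : cube m -> cube n) (phi phi' : cube m -> cube n)
    (psi psi' : cube m -> cube m) :
  in_box phi -> adj_preserving psi -> f =1 phi \o psi ->
  in_box phi' -> adj_preserving psi' -> f =1 phi' \o psi' ->
  phi' =1 phi /\ psi' =1 psi.
Proof.
move=> box_phi adj_psi fact box_phi' adj_psi' fact'.
have [bot_psi top_psi] := adj_endo_bot_top adj_psi.
have [bot_psi' top_psi'] := adj_endo_bot_top adj_psi'.
have eq_phi : phi' =1 phi.
  apply: coord_insertion_eq; try exact: in_box_insertion.
    by have := fact (cube_bot m); rewrite fact' /= bot_psi bot_psi'.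
  by have := fact (cube_top m); rewrite fact' /= top_psi top_psi'.
split=> // x; apply: (coord_insertion_inj (in_box_insertion box_phi)).
by rewrite -eq_phi -[phi' _]/((phi' \o psi') x) -fact' fact.
Qed.

Theorem proposition7p14 :
  (forall (m n : nat), (m <= n)%N -> forall f : cube m -> cube n,
     adj_preserving f ->
     exists phi : cube m -> cube n, exists psi : cube m -> cube m,
       [/\ in_box phi, adj_preserving psi, f =1 phi \o psi &
         forall (phi' : cube m -> cube n) (psi' : cube m -> cube m),
           in_box phi' -> adj_preserving psi' -> f =1 phi' \o psi' ->
           phi' =1 phi /\ psi' =1 psi]) /\
  (forall (m n : nat), (m <= n)%N -> forall f : cube m -> cube n,
     adj_preserving f -> injective f ->
     exists phi : cube m -> cube n, exists psi : cube m -> cube m,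
       [/\ in_box phi, adj_preserving psi /\ injective psi, f =1 phi \o psi &
         forall (phi' : cube m -> cube n) (psi' : cube m -> cube m),
           in_box phi' -> adj_preserving psi' -> injective psi' ->
           f =1 phi' \o psi' ->
           phi' =1 phi /\ psi' =1 psi]).
Proof.
split=> m n le_mn f adj_f => [|inj_f];
  have [phi [psi [box_phi adj_psi fact]]] := adj_factor_exists le_mn adj_f;
  exists phi, psi.
  by split=> // phi' psi' box_phi' adj_psi'; apply: adj_factor_unique.
split=> // [|phi' psi' box_phi' adj_psi' _].
  by split=> // x y eq_psi; apply: inj_f; rewrite !fact /= eq_psi.
exact: adj_factor_unique box_phi adj_psi fact box_phi' adj_psi'.
Qed.
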